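(* Assume the setting and Algorithm 1 described in the context, with $u_k$ $\mu$-strongly concave, and let $\lambda^*$ be a minimizer of $\varphi$ over $\mathbb{R}^m_+$. Then the iterates of Algorithm 1 started from any $\lambda^0\in\mathbb{R}^m_+$ satisfy, for all $t\ge 0$, $$\|z^t-\lambda^*\|_2\le\|\lambda^0-\lambda^*\|_2,\qquad \|y^t-\lambda^*\|_2\le\|\lambda^0-\lambda^*\|_2,\qquad \|\lambda^t-\lambda^*\|_2\le\|\lambda^0-\lambda^*\|_2 .$$
   Context: Setting: $m$ links, $n$ users, routing matrix $C\in\{0,1\}^{m\times n}$ with nonzero columns $C_k$, capacities $b\in\mathbb{R}^m$ with positive entries, utilities $u_k:\mathbb{R}_+\to\mathbb{R}$, $U(x)=\sum_k u_k(x_k)$. For $\lambda\in\mathbb{R}^m_+$: $x_k(\lambda)=\arg\max_{x_k\ge0}\{u_k(x_k)-x_k\langle\lambda,C_k\rangle\}$, $x(\lambda)=(x_k(\lambda))_k$, dual function $\varphi(\lambda)=\langle\lambda,b\rangle+\sum_k(u_k(x_k(\lambda))-x_k(\lambda)\langle\lambda,C_k\rangle)$. When each $u_k$ is $\mu$-strongly concave, $\varphi$ is convex and differentiable on $\mathbb{R}^m_+$ with $\nabla\varphi(\lambda)=b-Cx(\lambda)$, and $\nabla\varphi$ is $L$-Lipschitz with $L=nm^2/\mu$. $[\cdot]_+$ denotes componentwise positive part (projection onto $\mathbb{R}^m_+$). Algorithm 1 (primal-dual fast gradient method): coefficients $\alpha_t=\frac{t+1}{2}$, $A_t=\sum_{j=0}^t\alpha_j=\frac{(t+1)(t+2)}{4}$,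 $\tau_t=\frac{\alpha_{t+1}}{A_{t+1}}=\frac{2}{t+3}$. Given a starting point $\lambda^0\in\mathbb{R}^m_+$, for $t=0,1,\dots$: $y^t=[\lambda^t-\tfrac1L\nabla\varphi(\lambda^t)]_+$, $z^t=[\lambda^0-\tfrac1L\sum_{j=0}^t\alpha_j\nabla\varphi(\lambda^j)]_+$, $\lambda^{t+1}=\tau_t z^t+(1-\tau_t)y^t$. *)

From HB Require Import structures.
From mathcomp Require Import all_boot all_order all_algebra.
Set Implicit Arguments. Unset Strict Implicit. Unset Printing Implicit Defensive.
Import Order.TTheory GRing.Theory Num.Theory.
Local Open Scope ring_scope.

Section NUM.
Variable R : rcfType.

Definition vdot (m : nat) (u v : 'cV[R]_m) : R := \sum_(i < m) u i 0 * v i 0.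
Definition norm2 (m : nat) (v : 'cV[R]_m) : R := Num.sqrt (vdot v v).

Definition nonneg_vec (m : nat) (v : 'cV[R]_m) : Prop := forall i, 0 <= v i 0.

(* componentwise positive part = projection onto R^m_+ *)
Definition pos_part (m : nat) (v : 'cV[R]_m) : 'cV[R]_m :=
  \col_i Num.max (v i 0) 0.

Definition colk (m n : nat) (C : 'M[R]_(m, n)) (k : 'I_n) : 'cV[R]_m := col k C.

Definition strongly_concave_on_Rplus (mu : R) (f : R -> R) : Prop :=
  forall a c th, 0 <= a -> 0 <= c -> 0 <= th <= 1 ->
    th * f a + (1 - th) * f c + mu / 2 * th * (1 - th) * (a - c) ^+ 2
      <= f (th * a + (1 - th) * c).

Definition is_best_response (m n : nat) (C : 'M[R]_(m, n)) (u : 'I_n -> R -> R)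
    (x : 'cV[R]_m -> 'cV[R]_n) : Prop :=
  forall lam, nonneg_vec lam -> forall k,
    0 <= x lam k 0 /\
    forall y, 0 <= y ->
      u k y - y * vdot lam (colk C k)
        <= u k (x lam k 0) - x lam k 0 * vdot lam (colk C k).

Definition dual_phi (m n : nat) (C : 'M[R]_(m, n)) (b : 'cV[R]_m)
    (u : 'I_n -> R -> R) (x : 'cV[R]_m -> 'cV[R]_n) (lam : 'cV[R]_m) : R :=
  vdot lam b + \sum_(k < n) (u k (x lam k 0) - x lam k 0 * vdot lam (colk C k)).

Definition dual_grad (m n : nat) (C : 'M[R]_(m, n)) (b : 'cV[R]_m)
    (x : 'cV[R]_m -> 'cV[R]_n) (lam : 'cV[R]_m) : 'cV[R]_m :=
  b - C *m x lam.

Definition lipL (m n : nat) (mu : R) : R := n%:R * (m%:R ^+ 2) / mu.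

Definition alpha (t : nat) : R := t.+1%:R / 2.
Definition tau (t : nat) : R := 2 / (t + 3)%:R.

(* Algorithm 1 for a gradient map g, step 1/L, starting point lam0.
   The state at time t is (lambda^t, sum_{j<t} alpha_j g(lambda^j)). *)
Section Alg.
Variables (m : nat) (g : 'cV[R]_m -> 'cV[R]_m) (L : R) (lam0 : 'cV[R]_m).

Fixpoint fgm_state (t : nat) : 'cV[R]_m * 'cV[R]_m :=
  match t with
  | 0 => (lam0, 0)
  | t'.+1 =>
      let (l, s) := fgm_state t' in
      let s' := s + alpha t' *: g l in
      let y := pos_part (l - L^-1 *: g l) in
      let z := pos_part (lam0 - L^-1 *: s') in
      (tau t' *: z + (1 - tau t') *: y, s')
  end.

Definition fgm_lam (t : nat) : 'cV[R]_m := (fgm_state t).1.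

Definition fgm_y (t : nat) : 'cV[R]_m :=
  pos_part (fgm_lam t - L^-1 *: g (fgm_lam t)).

Definition fgm_z (t : nat) : 'cV[R]_m :=
  pos_part (lam0 - L^-1 *: \sum_(j < t.+1) alpha j *: g (fgm_lam j)).

Lemma fgm_state_snd t : (fgm_state t).2 = \sum_(j < t) alpha j *: g (fgm_lam j).
Proof.
elim: t => [|t IH]; first by rewrite big_ord0.
rewrite big_ord_recr /= -IH /fgm_lam /=.
by case: (fgm_state t).
Qed.

Lemma fgm_lamS t :
  fgm_lam t.+1 = tau t *: fgm_z t + (1 - tau t) *: fgm_y t.
Proof.
rewrite /fgm_z /fgm_y big_ord_recr /= -fgm_state_snd /fgm_lam /=.
by case: (fgm_state t).
Qed.

End Alg.
End NUM.

From HB Require Import structures.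
From mathcomp Require Import all_boot all_order all_algebra.
From mathcomp Require Import ring lra.
Import Order.TTheory GRing.Theory Num.Theory.
Local Open Scope ring_scope.

(* Strong concavity of the utilities makes the dual function phi convex and
   L-smooth on R^m_+, with L = n m^2 / mu.  For such a function a projected
   gradient step y = [lam - g(lam) / L]_+ satisfies, for every w >= 0,
     phi(y) + L/2 |w - y|^2 <= phi(lam) + <g(lam), w - lam> + L/2 |w - lam|^2;
   at the minimizer w = lamS the linearization is below phi(lamS) <= phi(y),
   so y is no farther from lamS than lam.  The point z^t minimizes Nesterov's
   estimate psi_t(w) = sum_j alpha_j (phi(lam^j) + <g(lam^j), w - lam^j>)
   + L/2 |w - lam0|^2 with curvature L, and A_t phi(y^t) <= psi_t(w) for all
   w >= 0; at w = lamS the linearizations sum to at most A_t phi(lamS) <=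
   A_t phi(y^t), which leaves L/2 |lamS - z^t|^2 <= L/2 |lamS - lam0|^2.
   Finally lam^(t+1) is a convex combination of z^t and y^t, so the bounds
   propagate by induction. *)

Local Notation sqnorm v := (vdot v v).

Section Vdot.
Context {R : rcfType} {m : nat}.
Implicit Types u v w : 'cV[R]_m.

Lemma vdotC u v : vdot u v = vdot v u.
Proof. by apply: eq_bigr => i _; rewrite mulrC. Qed.

Lemma vdotDl u v w : vdot (u + v) w = vdot u w + vdot v w.
Proof. by rewrite /vdot -big_split; apply: eq_bigr => i _; rewrite mxE mulrDl. Qed.

Lemma vdotBl u v w : vdot (u - v) w = vdot u w - vdot v w.
Proof. by rewrite /vdot -sumrB; apply: eq_bigr => i _; rewrite !mxE mulrBl. Qed.

Lemma vdotZl a u w : vdot (a *: u) w = a * vdot u w.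
Proof. by rewrite /vdot mulr_sumr; apply: eq_bigr => i _; rewrite !mxE mulrA. Qed.

Lemma vdotDr u v w : vdot w (u + v) = vdot w u + vdot w v.
Proof. by rewrite vdotC vdotDl !(vdotC w). Qed.

Lemma vdotBr u v w : vdot w (u - v) = vdot w u - vdot w v.
Proof. by rewrite vdotC vdotBl !(vdotC w). Qed.

Lemma vdotZr a u w : vdot w (a *: u) = a * vdot w u.
Proof. by rewrite vdotC vdotZl vdotC. Qed.

Lemma vdot_suml k (F : 'I_k -> 'cV[R]_m) w :
  vdot (\sum_(j < k) F j) w = \sum_(j < k) vdot (F j) w.
Proof.
elim: k F => [|k IH] F.
  by rewrite !big_ord0 /vdot big1 // => i _; rewrite mxE mul0r.
by rewrite !big_ord_recr /= vdotDl IH.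
Qed.

Lemma sqnorm_ge0 v : 0 <= sqnorm v.
Proof. by apply: sumr_ge0 => i _; rewrite -expr2 sqr_ge0. Qed.

Lemma sqnormB_sym u v : sqnorm (u - v) = sqnorm (v - u).
Proof. by apply: eq_bigr => i _; rewrite !mxE; ring. Qed.

Lemma sqnorm_conv (t : R) u v w : 0 <= t <= 1 ->
  sqnorm (t *: u + (1 - t) *: v - w) <= t * sqnorm (u - w) + (1 - t) * sqnorm (v - w).
Proof.
move=> /andP[t_ge0 t_le1]; rewrite /vdot !mulr_sumr -big_split /=.
apply: ler_sum => i _; rewrite !mxE -!expr2.
have omt_ge0 : 0 <= 1 - t by lra.
have := mulr_ge0 (mulr_ge0 t_ge0 omt_ge0) (sqr_ge0 (u i 0 - v i 0)).
by rewrite !expr2; lra.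
Qed.

Lemma vdot_mulmx n (A : 'M[R]_(m, n)) (a : 'cV[R]_n) w :
  vdot (A *m a) w = \sum_(k < n) a k 0 * vdot w (colk A k).
Proof.
rewrite /vdot; under eq_bigr => i _ do rewrite mxE big_distrl /=.
rewrite exchange_big /=; apply: eq_bigr => k _.
by rewrite big_distrr /=; apply: eq_bigr => i _; rewrite /colk mxE; ring.
Qed.
End Vdot.

Lemma sqr_sum_le {R : realFieldType} k (w : 'I_k -> R) :
  (\sum_(i < k) w i) ^+ 2 <= k%:R * \sum_(i < k) w i ^+ 2.
Proof.
set Q := \sum_(i < k) w i ^+ 2.
(* [k Q] is the double sum of [(w_i^2 + w_j^2) / 2 >= w_i w_j]. *)
have -> : k%:R * Q = \sum_(i < k) \sum_(j < k) (w i ^+ 2 + w j ^+ 2) / 2.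
  transitivity (\sum_(i < k) (k%:R * w i ^+ 2 / 2 + Q / 2)).
    rewrite big_split /= -!mulr_suml -mulr_sumr sumr_const card_ord -/Q.
    by rewrite -[Q *+ k]mulr_natl -splitr.
  apply: eq_bigr => i _.
  by rewrite -mulr_suml big_split /= sumr_const card_ord -/Q -mulr_natl; ring.
rewrite expr2 mulr_suml; apply: ler_sum => i _; rewrite mulr_sumr.
apply: ler_sum => j _; have := sqr_ge0 (w i - w j); rewrite !expr2; lra.
Qed.

Section PositivePart.
Context {R : rcfType} {m : nat}.
Implicit Types v w : 'cV[R]_m.

Lemma pos_part_nonneg v : nonneg_vec (pos_part v).
Proof. by move=> i; rewrite mxE le_max lexx orbT. Qed.

Lemma pos_part_id v : nonneg_vec v -> pos_part v = v.
Proof. by move=> v_ge0; apply/matrixP => i j; rewrite ord1 mxE max_l. Qed.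

Lemma nonneg_vec_conv (t : R) v w : 0 <= t <= 1 -> nonneg_vec v -> nonneg_vec w ->
  nonneg_vec (t *: v + (1 - t) *: w).
Proof.
move=> /andP[t_ge0 t_le1] v_ge0 w_ge0 i; rewrite !mxE.
by apply: addr_ge0; apply: mulr_ge0 => //; lra.
Qed.

(* [[l - s / L]_+] minimizes [s v + L/2 (v - l)^2] over [v >= 0]; the
   inequality is that optimality, with the strong convexity gap. *)
Lemma max0_prox_ineq (L s l w y : R) : 0 < L -> 0 <= w -> y = Num.max (l - L^-1 * s) 0 ->
  L / 2 * (y - l) ^+ 2 + L / 2 * (w - y) ^+ 2 <= s * (w - y) + L / 2 * (w - l) ^+ 2.
Proof.
move=> L_gt0 w_ge0 ->{y}; set y := Num.max _ _; rewrite -subr_ge0.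
have -> : s * (w - y) + L / 2 * (w - l) ^+ 2 - (L / 2 * (y - l) ^+ 2 + L / 2 * (w - y) ^+ 2)
    = (w - y) * (s + L * (y - l)) by rewrite !expr2; field.
rewrite /y; case: (leP (l - L^-1 * s) 0) => step_le0.
- apply: mulr_ge0; first lra.
  have := mulr_ge0_le0 (ltW L_gt0) step_le0.
  have -> : L * (l - L^-1 * s) = L * l - s by field; rewrite gt_eqF.
  lra.
- have -> : s + L * (l - L^-1 * s - l) = 0 by field; rewrite gt_eqF.
  by rewrite mulr0.
Qed.

Lemma pos_part_prox_ineq (L : R) s l w y : 0 < L -> nonneg_vec w ->
  y = pos_part (l - L^-1 *: s) ->
  L / 2 * sqnorm (y - l) + L / 2 * sqnorm (w - y) <= vdot s (w - y) + L / 2 * sqnorm (w - l).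
Proof.
move=> L_gt0 w_ge0 ->; rewrite /vdot !mulr_sumr -!big_split /=.
apply: ler_sum => i _; rewrite !mxE -!expr2.
by apply: max0_prox_ineq => //; rewrite mxE.
Qed.
End PositivePart.

Section StrongConcavity.
Variables (R : rcfType) (mu : R).

Lemma strongly_concave_subr_linear (f : R -> R) p :
  strongly_concave_on_Rplus mu f -> strongly_concave_on_Rplus mu (fun y => f y - y * p).
Proof. by move=> f_sc a c th a_ge0 c_ge0 th01; have := f_sc a c th a_ge0 c_ge0 th01; lra. Qed.

Lemma strongly_concave_max_growth (f : R -> R) a y :
  strongly_concave_on_Rplus mu f -> 0 <= a -> (forall v, 0 <= v -> f v <= f a) ->
  0 <= y -> f y <= f a - mu / 2 * (y - a) ^+ 2.
Proof.
move=> f_sc a_ge0 a_max y_ge0.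
set D := f y - f a; set K := mu / 2 * (y - a) ^+ 2.
have chord th : 0 <= th -> th < 1 -> D + K * th <= 0.
  move=> th_ge0 th_lt1.
  have v_ge0 : 0 <= th * a + (1 - th) * y by apply: addr_ge0; apply: mulr_ge0 => //; lra.
  have := f_sc a y th a_ge0 y_ge0; rewrite th_ge0 (ltW th_lt1) => /(_ isT) sc.
  have : (1 - th) * (D + K * th) <= 0.
    have := a_max _ v_ge0; move: sc; rewrite /D /K !expr2; lra.
  by rewrite pmulr_rle0 //; lra.
have D_le0 : D <= 0 by have := chord 0 (lexx _); rewrite mulr0 addr0; apply; lra.
suff : D + K <= 0 by rewrite /D; lra.
(* otherwise the chord bound fails at [th = (K - D) / 2K < 1] *)
rewrite leNgt; apply/negP => DK_gt0.
have K_gt0 : 0 < K by lra.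
pose th := (K - D) / (2 * K).
have thK : th * K = (K - D) / 2 by rewrite /th; field; lra.
have th_lt1 : th < 1 by rewrite /th ltr_pdivrMr; lra.
have th_ge0 : 0 <= th by rewrite /th divr_ge0 //; lra.
by have := chord th th_ge0 th_lt1; rewrite [K * th]mulrC thK; lra.
Qed.
End StrongConcavity.

Section DualFunction.
Variables (R : rcfType) (m n : nat) (C : 'M[R]_(m, n)) (b : 'cV[R]_m)
  (u : 'I_n -> R -> R) (mu : R) (x : 'cV[R]_m -> 'cV[R]_n).
Hypotheses (C01 : forall i k, C i k = 0 \/ C i k = 1) (mu_gt0 : 0 < mu)
  (u_sc : forall k, strongly_concave_on_Rplus mu (u k))
  (x_br : is_best_response C u x).

Local Notation phi := (dual_phi C b u x).
Local Notation g := (dual_grad C b x).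

Definition surplus (lam : 'cV[R]_m) k (y : R) : R := u k y - y * vdot lam (colk C k).

Lemma surplus_growth lam k (y : R) : nonneg_vec lam -> 0 <= y ->
  surplus lam k y <= surplus lam k (x lam k 0) - mu / 2 * (y - x lam k 0) ^+ 2.
Proof.
move=> lam_ge0 y_ge0; have [x_ge0 x_max] := x_br _ lam_ge0 k.
by apply: strongly_concave_max_growth => //; apply: strongly_concave_subr_linear.
Qed.

Lemma dual_phi_gap lam nu :
  phi nu - phi lam - vdot (g lam) (nu - lam)
  = \sum_(k < n) (surplus nu k (x nu k 0) - surplus nu k (x lam k 0)).
Proof.
rewrite /dual_grad vdotBl vdot_mulmx /dual_phi vdotBr (vdotC nu) (vdotC lam).
under [X in _ - (_ - X)]eq_bigr => k _ do rewrite vdotBl.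
have -> : \sum_(k < n) (surplus nu k (x nu k 0) - surplus nu k (x lam k 0)) =
    \sum_(k < n) (u k (x nu k 0) - x nu k 0 * vdot nu (colk C k))
  - \sum_(k < n) (u k (x lam k 0) - x lam k 0 * vdot lam (colk C k))
  + \sum_(k < n) x lam k 0 * (vdot nu (colk C k) - vdot lam (colk C k)).
  by rewrite -sumrB -big_split; apply: eq_bigr => k _ /=; rewrite /surplus; ring.
ring.
Qed.

Lemma dual_phi_convex lam nu : nonneg_vec lam -> nonneg_vec nu ->
  phi lam + vdot (g lam) (nu - lam) <= phi nu.
Proof.
move=> lam_ge0 nu_ge0; rewrite -subr_ge0 opprD addrA dual_phi_gap.
apply: sumr_ge0 => k _; rewrite subr_ge0.
by have [x_ge0 _] := x_br _ lam_ge0 k; have [_ ->] := x_br _ nu_ge0 k.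
Qed.

Lemma vdot_colk_sqr_le (d : 'cV[R]_m) k : vdot d (colk C k) ^+ 2 <= m%:R * sqnorm d.
Proof.
rewrite /vdot; apply: le_trans (sqr_sum_le _ _) _.
apply: ler_wpM2l => //; apply: ler_sum => i _.
rewrite /colk mxE; case: (C01 i k) => ->; rewrite ?mulr0 ?mulr1.
- by rewrite expr0n /= -expr2 sqr_ge0.
- by rewrite expr2.
Qed.

(* quadratic growth of the surplus at [x lam], then completing the square in
   [x nu - x lam] *)
Lemma surplus_gap_le lam nu k : nonneg_vec lam -> nonneg_vec nu ->
  surplus nu k (x nu k 0) - surplus nu k (x lam k 0)
  <= vdot (nu - lam) (colk C k) ^+ 2 / (2 * mu).
Proof.
move=> lam_ge0 nu_ge0; set p := vdot (nu - lam) (colk C k).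
have [xn_ge0 _] := x_br _ nu_ge0 k.
have growth := surplus_growth lam k _ lam_ge0 xn_ge0.
have shift y : surplus nu k y = surplus lam k y - y * p.
  by rewrite /surplus /p vdotBl; ring.
set e := x nu k 0 - x lam k 0.
have square : 0 <= p ^+ 2 / (2 * mu) + mu / 2 * e ^+ 2 + e * p.
  have -> : p ^+ 2 / (2 * mu) + mu / 2 * e ^+ 2 + e * p = (mu * e + p) ^+ 2 / (2 * mu).
    by rewrite !expr2; field; rewrite gt_eqF.
  by apply: divr_ge0; rewrite ?sqr_ge0 ?mulr_ge0 ?ltW.
by rewrite !shift; move: growth square; rewrite /e; lra.
Qed.

Lemma dual_phi_smooth lam nu : nonneg_vec lam -> nonneg_vec nu ->
  phi nu <= phi lam + vdot (g lam) (nu - lam) + lipL m n mu / 2 * sqnorm (nu - lam).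
Proof.
move=> lam_ge0 nu_ge0; set d := nu - lam.
suff : phi nu - phi lam - vdot (g lam) d <= lipL m n mu / 2 * sqnorm d by lra.
rewrite dual_phi_gap.
apply: (@le_trans _ _ (\sum_(k < n) m%:R * sqnorm d / (2 * mu))).
  apply: ler_sum => k _; apply: le_trans (surplus_gap_le _ _ k lam_ge0 nu_ge0) _.
  by apply: ler_wpM2r; [rewrite invr_ge0 mulr_ge0 // ltW | exact: vdot_colk_sqr_le].
have m_le_m2 : (m%:R : R) <= m%:R ^+ 2.
  by rewrite -natrX ler_nat; case: (m) => // m'; rewrite leq_pmulr.
rewrite sumr_const card_ord -[_ *+ n]mulr_natl /lipL -subr_ge0.
have -> : n%:R * m%:R ^+ 2 / mu / 2 * sqnorm d - n%:R * (m%:R * sqnorm d / (2 * mu))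
   = n%:R * (m%:R ^+ 2 - m%:R) * sqnorm d / (2 * mu) by field; rewrite gt_eqF.
apply: divr_ge0; last by rewrite mulr_ge0 // ltW.
by rewrite mulr_ge0 ?sqnorm_ge0 // mulr_ge0 // subr_ge0.
Qed.
End DualFunction.

Section Coefficients.
Variable R : rcfType.

Definition Asum t : R := \sum_(j < t.+1) alpha R j.

Lemma alpha_ge0 j : 0 <= alpha R j.
Proof. by rewrite /alpha divr_ge0 // ler0n. Qed.

Lemma Asum_ge0 t : 0 <= Asum t.
Proof. by apply: sumr_ge0 => j _; apply: alpha_ge0. Qed.

Lemma AsumS t : Asum t.+1 = Asum t + alpha R t.+1.
Proof. by rewrite /Asum big_ord_recr. Qed.

Lemma AsumE t : Asum t = t.+1%:R * t.+2%:R / 4.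
Proof.
elim: t => [|t IH]; first by rewrite /Asum big_ord1 /alpha /=; field.
by rewrite AsumS IH /alpha -!natr1; field.
Qed.

Lemma tau_itv t : 0 <= tau R t <= 1.
Proof.
have t_ge0 : 0 <= (t%:R : R) by rewrite ler0n.
rewrite /tau natrD divr_ge0 ?addr_ge0 ?ler0n //= ler_pdivrMr; lra.
Qed.

Lemma Asum_tau t : Asum t.+1 * tau R t = alpha R t.+1.
Proof.
have t_ge0 : 0 <= (t%:R : R) by rewrite ler0n.
rewrite AsumE /tau /alpha natrD -!natr1; field; lra.
Qed.

Lemma Asum_tau2_le1 t : Asum t.+1 * tau R t ^+ 2 <= 1.
Proof.
have t_ge0 : 0 <= (t%:R : R) by rewrite ler0n.
have -> : Asum t.+1 * tau R t ^+ 2 = (t%:R + 2) / (t%:R + 3).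
  by rewrite AsumE /tau natrD -!natr1; field; lra.
rewrite ler_pdivrMr; lra.
Qed.
End Coefficients.

Section FastGradient.
Context {R : rcfType} {m : nat} {phi : 'cV[R]_m -> R} {g : 'cV[R]_m -> 'cV[R]_m} {L : R}.
Hypotheses (L_gt0 : 0 < L)
  (phi_convex : forall lam nu, nonneg_vec lam -> nonneg_vec nu ->
     phi lam + vdot (g lam) (nu - lam) <= phi nu)
  (phi_smooth : forall lam nu, nonneg_vec lam -> nonneg_vec nu ->
     phi nu <= phi lam + vdot (g lam) (nu - lam) + L / 2 * sqnorm (nu - lam)).

Definition grad_step lam := pos_part (lam - L^-1 *: g lam).

Lemma grad_step_ineq lam w : nonneg_vec lam -> nonneg_vec w ->
  phi (grad_step lam) + L / 2 * sqnorm (w - grad_step lam)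
  <= phi lam + vdot (g lam) (w - lam) + L / 2 * sqnorm (w - lam).
Proof.
move=> lam_ge0 w_ge0.
have := phi_smooth _ _ lam_ge0 (pos_part_nonneg (lam - L^-1 *: g lam)).
have := @pos_part_prox_ineq _ _ L (g lam) lam w _ L_gt0 w_ge0 (erefl (grad_step lam)).
by rewrite /grad_step !vdotBr; lra.
Qed.

Section Iterates.
Context {lam0 : 'cV[R]_m}.
Hypothesis lam0_ge0 : nonneg_vec lam0.

Local Notation lamt := (fgm_lam g L lam0).
Local Notation yt := (fgm_y g L lam0).
Local Notation zt := (fgm_z g L lam0).

(* Nesterov's estimate function: [z^t] is its minimizer over [R^m_+]. *)
Definition estimate t w :=
  \sum_(j < t.+1) alpha R j * (phi (lamt j) + vdot (g (lamt j)) (w - lamt j))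
  + L / 2 * sqnorm (w - lam0).

Lemma fgm_lam_nonneg t : nonneg_vec (lamt t).
Proof.
case: t => [|t] //; rewrite fgm_lamS.
by apply: nonneg_vec_conv; [exact: tau_itv | exact: pos_part_nonneg | exact: pos_part_nonneg].
Qed.

Lemma estimate_z_min t w : nonneg_vec w ->
  estimate t (zt t) + L / 2 * sqnorm (w - zt t) <= estimate t w.
Proof.
move=> w_ge0; set S := \sum_(j < t.+1) alpha R j *: g (lamt j).
have prox := @pos_part_prox_ineq _ _ L S lam0 w (zt t) L_gt0 w_ge0 erefl.
have lin : vdot S (w - zt t) = \sum_(j < t.+1) alpha R j * vdot (g (lamt j)) (w - zt t).
  by rewrite vdot_suml; apply: eq_bigr => j _; rewrite vdotZl.
have split_w : \sum_(j < t.+1) alpha R j * (phi (lamt j) + vdot (g (lamt j)) (w - lamt j)) =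
    \sum_(j < t.+1) alpha R j * (phi (lamt j) + vdot (g (lamt j)) (zt t - lamt j))
  + \sum_(j < t.+1) alpha R j * vdot (g (lamt j)) (w - zt t).
  by rewrite -big_split; apply: eq_bigr => j _ /=; rewrite !vdotBr; ring.
rewrite /estimate split_w -lin.
by have := sqnorm_ge0 (zt t - lam0); move: prox; lra.
Qed.

Lemma Asum_phi_le_estimate t w : nonneg_vec w -> Asum R t * phi (yt t) <= estimate t w.
Proof.
have L2_ge0 : 0 <= L / 2 by rewrite divr_ge0 // ltW.
elim: t w => [|t IH] w w_ge0.
  have := grad_step_ineq _ _ lam0_ge0 w_ge0.
  have := mulr_ge0 L2_ge0 (sqnorm_ge0 (w - grad_step lam0)).
  have := mulr_ge0 L2_ge0 (sqnorm_ge0 (w - lam0)).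
  by rewrite /estimate /Asum !big_ord1 /alpha /=; lra.
set l := lamt t.+1; set th := tau R t; set v := th *: w + (1 - th) *: yt t.
have th01 := tau_itv R t.
have v_ge0 : nonneg_vec v by apply: nonneg_vec_conv => //; exact: pos_part_nonneg.
have l_ge0 : nonneg_vec l by apply: fgm_lam_nonneg.
have estS : estimate t.+1 w = estimate t w + alpha R t.+1 * (phi l + vdot (g l) (w - l)).
  by rewrite /estimate big_ord_recr /=; ring.
have z_min := estimate_z_min t w w_ge0.
have ind := IH _ (pos_part_nonneg _ : nonneg_vec (zt t)).
have lin_y : Asum R t * (phi l + vdot (g l) (yt t - l)) <= Asum R t * phi (yt t).
  by rewrite ler_wpM2l ?Asum_ge0 //; apply: phi_convex => //; apply: pos_part_nonneg.
have lin_v : Asum R t.+1 * vdot (g l) (v - l) =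
    Asum R t * vdot (g l) (yt t - l) + alpha R t.+1 * vdot (g l) (w - l).
  have -> : Asum R t = Asum R t.+1 - alpha R t.+1 by rewrite AsumS; ring.
  by rewrite /v !vdotBr vdotDr !vdotZr -(Asum_tau R t) -/th; ring.
(* [v - lambda^(t+1) = tau_t (w - z^t)], and [A_(t+1) tau_t^2 <= 1] *)
have quad_v : Asum R t.+1 * (L / 2 * sqnorm (v - l)) <= L / 2 * sqnorm (w - zt t).
  have -> : v - l = th *: (w - zt t).
    by rewrite /l fgm_lamS /v -/th opprD addrACA subrr addr0 scalerBr.
  rewrite vdotZl vdotZr; set N := sqnorm (w - zt t).
  have -> : Asum R t.+1 * (L / 2 * (th * (th * N))) = L / 2 * N * (Asum R t.+1 * th ^+ 2).
    by rewrite expr2; ring.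
  by apply: ler_piMr; [rewrite mulr_ge0 ?sqnorm_ge0 | exact: Asum_tau2_le1].
have step : phi (grad_step l) <= phi l + vdot (g l) (v - l) + L / 2 * sqnorm (v - l).
  have := grad_step_ineq _ _ l_ge0 v_ge0.
  by have := mulr_ge0 L2_ge0 (sqnorm_ge0 (v - grad_step l)); lra.
have := ler_wpM2l (Asum_ge0 R t.+1) step.
have -> : yt t.+1 = grad_step l by [].
move: estS z_min ind lin_y lin_v quad_v; rewrite AsumS; lra.
Qed.

Section Minimizer.
Context {lamS : 'cV[R]_m}.
Hypotheses (lamS_ge0 : nonneg_vec lamS)
  (lamS_min : forall lam, nonneg_vec lam -> phi lamS <= phi lam).

Lemma grad_step_dist_le lam : nonneg_vec lam ->
  sqnorm (grad_step lam - lamS) <= sqnorm (lam - lamS).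
Proof.
move=> lam_ge0; rewrite sqnormB_sym [sqnorm (lam - _)]sqnormB_sym.
rewrite -(ler_pM2l (_ : 0 < L / 2)) ?divr_gt0 //.
have := grad_step_ineq _ _ lam_ge0 lamS_ge0.
have := phi_convex _ _ lam_ge0 lamS_ge0.
have := lamS_min _ (pos_part_nonneg (lam - L^-1 *: g lam)).
rewrite /grad_step; lra.
Qed.

Lemma fgm_z_dist_le t : sqnorm (zt t - lamS) <= sqnorm (lam0 - lamS).
Proof.
rewrite sqnormB_sym [sqnorm (lam0 - _)]sqnormB_sym.
rewrite -(ler_pM2l (_ : 0 < L / 2)) ?divr_gt0 //.
have z_min := estimate_z_min t lamS lamS_ge0.
have y_est := Asum_phi_le_estimate t (zt t) (pos_part_nonneg _).
have y_ge_min : Asum R t * phi lamS <= Asum R t * phi (yt t).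
  by rewrite ler_wpM2l ?Asum_ge0 //; apply/lamS_min/pos_part_nonneg.
have lin_le : \sum_(j < t.+1) alpha R j * (phi (lamt j) + vdot (g (lamt j)) (lamS - lamt j))
    <= Asum R t * phi lamS.
  rewrite /Asum mulr_suml; apply: ler_sum => j _.
  by rewrite ler_wpM2l ?alpha_ge0 //; apply: phi_convex => //; apply: fgm_lam_nonneg.
by move: z_min y_est y_ge_min lin_le; rewrite /estimate; lra.
Qed.

Lemma fgm_lam_dist_le t : sqnorm (lamt t - lamS) <= sqnorm (lam0 - lamS).
Proof.
elim: t => [//|t IH]; rewrite fgm_lamS.
apply: le_trans (sqnorm_conv _ _ _ _ (tau_itv R t)) _.
have [th_ge0 th_le1] := andP (tau_itv R t).
have y_le : sqnorm (yt t - lamS) <= sqnorm (lam0 - lamS).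
  exact: le_trans (grad_step_dist_le _ (fgm_lam_nonneg t)) IH.
have := ler_wpM2l th_ge0 (fgm_z_dist_le t).
have := ler_wpM2l (_ : 0 <= 1 - tau R t) y_le; rewrite subr_ge0 => /(_ th_le1).
lra.
Qed.

Lemma fgm_y_dist_le t : sqnorm (yt t - lamS) <= sqnorm (lam0 - lamS).
Proof. exact: le_trans (grad_step_dist_le _ (fgm_lam_nonneg t)) (fgm_lam_dist_le t). Qed.
End Minimizer.
End Iterates.
End FastGradient.

Section ZeroStep.
Variables (R : rcfType) (m : nat) (g : 'cV[R]_m -> 'cV[R]_m) (lam0 : 'cV[R]_m).
Hypothesis lam0_ge0 : nonneg_vec lam0.

(* With [L = 0] the step [L^-1] is [0^-1 = 0], so the method never moves. *)
Lemma fgm_lam_L0 t : fgm_lam g 0 lam0 t = lam0.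
Proof.
elim: t => [//|t IH]; rewrite fgm_lamS /fgm_z /fgm_y IH invr0 !scale0r !subr0.
by rewrite pos_part_id // -scalerDl addrC subrK scale1r.
Qed.

Lemma fgm_y_L0 t : fgm_y g 0 lam0 t = lam0.
Proof. by rewrite /fgm_y fgm_lam_L0 invr0 scale0r subr0 pos_part_id. Qed.

Lemma fgm_z_L0 t : fgm_z g 0 lam0 t = lam0.
Proof. by rewrite /fgm_z invr0 scale0r subr0 pos_part_id. Qed.
End ZeroStep.

Theorem mainTheorem3 (R : rcfType) (m n : nat)
    (C : 'M[R]_(m, n)) (b : 'cV[R]_m) (u : 'I_n -> R -> R) (mu : R)
    (x : 'cV[R]_m -> 'cV[R]_n) (lamS lam0 : 'cV[R]_m) :
  (forall i k, C i k = 0 \/ C i k = 1) ->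
  (forall k, exists i, C i k != 0) ->
  (forall i, 0 < b i 0) ->
  0 < mu ->
  (forall k, strongly_concave_on_Rplus mu (u k)) ->
  is_best_response C u x ->
  nonneg_vec lamS ->
  (forall lam, nonneg_vec lam -> dual_phi C b u x lamS <= dual_phi C b u x lam) ->
  nonneg_vec lam0 ->
  forall t : nat,
    let g := dual_grad C b x in
    let L := lipL m n mu in
    norm2 (fgm_z g L lam0 t - lamS) <= norm2 (lam0 - lamS) /\
    norm2 (fgm_y g L lam0 t - lamS) <= norm2 (lam0 - lamS) /\
    norm2 (fgm_lam g L lam0 t - lamS) <= norm2 (lam0 - lamS).
Proof.
move=> C01 _ _ mu_gt0 u_sc x_br lamS_ge0 lamS_min lam0_ge0 t g L.
rewrite /norm2 !ler_sqrt ?sqnorm_ge0 //.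
have [L0 | L_neq0] := eqVneq L 0.
  by rewrite L0 fgm_z_L0 // fgm_y_L0 // fgm_lam_L0 //.
have L_gt0 : 0 < L.
  by rewrite lt0r L_neq0 /L /lipL /= divr_ge0 ?mulr_ge0 ?exprn_ge0 ?ler0n ?ltW.
have convex := @dual_phi_convex _ _ _ _ b _ _ x_br.
have smooth := @dual_phi_smooth _ _ _ _ b _ _ _ C01 mu_gt0 u_sc x_br.
split; first exact: (fgm_z_dist_le L_gt0 convex smooth lam0_ge0 lamS_ge0 lamS_min t).
split; first exact: (fgm_y_dist_le L_gt0 convex smooth lam0_ge0 lamS_ge0 lamS_min t).
exact: (fgm_lam_dist_le L_gt0 convex smooth lam0_ge0 lamS_ge0 lamS_min t).
Qed.
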